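(* Let $\mu>0$, $\sigma\ge0$. Then the robust approximation ratio satisfies \[\mathrm{APX}(\mu,\sigma)\ \ge\ \sup_{(\Theta,F)\in\Delta_{\mu,\sigma}}\frac{\mathbb{E}_{\theta\sim\Theta}[\mathrm{OPT}(F_\theta)]}{\mathrm{OPT}\left(\mathbb{E}_{\theta\sim\Theta}[F_\theta]\right)}.\]
   Context: A nonnegative real random variable is $(\mu,\sigma)$-distributed if its expectation is $\mu$ and its standard deviation is at most $\sigma$; $\mathbb{F}_{\mu,\sigma}$ is the class of such distributions (identified with their cdfs). For a distribution $F$ of a nonnegative $X$ and price $p\ge 0$, $\mathrm{REV}(p;F)=p\Pr[X\ge p]$; for a distribution $A$ over prices, $\mathrm{REV}(A;F)=\mathbb{E}_{p\sim A}[\mathrm{REV}(p;F)]$; $\mathrm{OPT}(F)=\sup_{p\ge0}\mathrm{REV}(p;F)$; $\mathrm{APX}(\mu,\sigma)=\inf_A\sup_{F\in\mathbb{F}_{\mu,\sigma}}\mathrm{OPT}(F)/\mathrm{REV}(A;F)$, the infimum over all distributions $A$ over nonnegative prices (ratios with zero denominator are $+\infty$). A $(\mu,\sigma)$ mixture is a pair $(\Theta,F)$, where $\Theta$ is a probability measure on a measurable space $T$ and $F:\mathbb{R}_{\ge0}\times T\to\mathbb{R}$ is measurable such that each $F_\theta(x)=F(x;\theta)$ is the cdf of a distribution in $\mathbb{F}_{\mu,\sigma}$; $\Delta_{\mu,\sigma}$ is the class of all $(\mu,\sigma)$ mixtures. The posterior distribution $\mathbb{E}_{\theta\sim\Theta}[F_\theta]$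 is the distribution with cdf $z\mapsto\mathbb{E}_{\theta\sim\Theta}[F_\theta(z)]$. *)

From HB Require Import structures.
From mathcomp Require Import all_boot all_order all_algebra.
From mathcomp Require Import all_classical all_reals all_analysis.
Set Implicit Arguments. Unset Strict Implicit. Unset Printing Implicit Defensive.
Import Order.TTheory GRing.Theory Num.Theory.
Import numFieldNormedType.Exports.
Local Open Scope classical_set_scope.
Local Open Scope ring_scope.
Local Open Scope ereal_scope.

Definition nonneg_dist {R : realType} (P : probability R R) : Prop :=
  P `]-oo, 0%R[%classic = 0.

Definition dcdf {R : realType} (P : probability R R) (x : R) : \bar R :=
  P `]-oo, x]%classic.

Definition Fclass {R : realType} (mu sigma : R) : set (probability R R) :=
  [set P | nonneg_dist P
         /\ \int[P]_x (x%:E) = mu%:E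
         /\ \int[P]_x (((x - mu) ^+ 2)%R%:E) <= ((sigma ^+ 2)%R)%:E].

Definition REV {R : realType} (p : R) (P : probability R R) : \bar R :=
  p%:E * P `[p, +oo[%classic.

Definition REVA {R : realType} (A P : probability R R) : \bar R :=
  \int[A]_p REV p P.

Definition OPT {R : realType} (P : probability R R) : \bar R :=
  ereal_sup [set REV p P | p in [set p : R | (0 <= p)%R]].

Definition ratio_inf {R : realType} (a b : \bar R) : \bar R :=
  if b == 0 then +oo else a * b^-1.

Definition APX {R : realType} (mu sigma : R) : \bar R :=
  ereal_inf [set ereal_sup [set ratio_inf (OPT P) (REVA A P) | P in Fclass mu sigma]
            | A in [set A : probability R R | nonneg_dist A]].

(** Fix a distribution A of nonnegative prices and let s be the worst ratio
    OPT(F) / REV(A;F) over F in F_{mu,sigma}; if s is infinite there is nothing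
    to prove.  Every component of the mixture then satisfies
    OPT(F_theta) <= s * REV(A;F_theta), with REV(A;F_theta) > 0.  Since
    Pr[X >= p] is affine in the distribution, Tonelli's theorem on (p, theta)
    gives E_theta[REV(A;F_theta)] <= REV(A;Q) <= OPT(Q) for the posterior Q,
    hence E_theta[OPT(F_theta)] <= s * OPT(Q) with OPT(Q) > 0, i.e. the
    mixture ratio is at most s. *)

From HB Require Import structures.
From mathcomp Require Import all_boot all_order all_algebra.
From mathcomp Require Import all_classical all_reals all_analysis.
From mathcomp Require Import measurable_realfun.
Import Order.TTheory GRing.Theory Num.Theory.
Import numFieldNormedType.Exports.
Local Open Scope classical_set_scope.
Local Open Scope ring_scope.
Local Open Scope ereal_scope.

Section integral_facts.
Context {d : measure_display} {T : measurableType d} {R : realType}.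

Lemma le_integral_pointwise (mu : {measure set T -> \bar R}) (D : set T)
    (f g : T -> \bar R) :
  (forall x, D x -> f x <= g x) -> \int[mu]_(x in D) f x <= \int[mu]_(x in D) g x.
Proof.
move=> fg; rewrite /integral.
have pfg : {in setT, forall x, (f \_ D) x <= (g \_ D) x}.
  by move=> x _; rewrite /patch; case: ifPn => // /set_mem /fg.
apply: leeB; apply: ereal_sup_le => _ [h /= hf <-]; exists h => //= x.
- exact: le_trans (hf x) (funepos_le pfg (in_setT x)).
- exact: le_trans (hf x) (funeneg_le pfg (in_setT x)).
Qed.

Lemma integral_gt0 (mu : {measure set T -> \bar R}) (f : T -> \bar R) :
  (0 < mu setT) -> measurable_fun setT f -> (forall x, 0 < f x) ->
  0 < \int[mu]_x f x.
Proof.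
move=> mu0 mf f0; rewrite lt0e integral_ge0 ?andbT => [|x _]; last exact: ltW.
apply/eqP => intf0.
have : \int[mu]_x `|f x| = 0.
  by rewrite -intf0; apply: eq_integral => x _; rewrite gee0_abs// ltW.
move=> /(ae_eq_integral_abs mu measurableT mf).1 [N [mN N0 fN]].
have : mu setT <= mu N.
  apply: le_measure; rewrite ?inE// => x _; apply: fN => /(_ I) fx0.
  by have := f0 x; rewrite fx0 ltxx.
by rewrite N0 leNgt mu0.
Qed.

Lemma probability_inhabited (P : probability T R) : inhabited T.
Proof.
apply: contrapT => T0.
have : P setT = 0.
  by rewrite (_ : setT = set0) ?measure0//; apply/seteqP; split => // x; case: T0.
by rewrite probability_setT => /eqP; rewrite onee_eq0.
Qed.

End integral_facts.

Section dcdf.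
Context {R : realType} (P : probability R R).

Lemma dcdf_fin_num x : dcdf P x \is a fin_num.
Proof.
by rewrite ge0_fin_numE ?measure_ge0// (le_lt_trans (probability_le1 _ _)) ?ltry.
Qed.

Lemma dcdf_le1 x : dcdf P x <= 1.
Proof. exact: probability_le1. Qed.

Lemma onemdcdf x : 1 - dcdf P x = P `]x, +oo[%classic.
Proof. by rewrite /dcdf -probability_setC// setCitvl. Qed.

Lemma dcdf_lt0 x : nonneg_dist P -> (x < 0)%R -> dcdf P x = 0.
Proof.
move=> P0 x0; apply/eqP; rewrite eq_le measure_ge0 andbT -P0.
by apply: le_measure; rewrite ?inE// => y /=; rewrite !in_itv/= => /le_lt_trans; apply.
Qed.

Lemma cvg_probability_itvoy p :
  (fun n => P `](p - n.+1%:R^-1)%R, +oo[%classic) @ \oo --> P `[p, +oo[%classic.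
Proof.
have -> : `[p, +oo[%classic = \bigcap_n `](p - n.+1%:R^-1)%R, +oo[%classic.
  apply/seteqP; split=> x /=; rewrite in_itv/= andbT.
    by move=> px n _ /=; rewrite in_itv/= andbT (lt_le_trans _ px)// ltrBlDr ltrDl.
  move=> h; rewrite leNgt; apply/negP => xp.
  have [k hk] := ltr_add_invr xp.
  by have := h k I; rewrite /= in_itv/= andbT ltrBlDr ltNge (ltW hk).
apply: nonincreasing_cvg_mu => //.
- by rewrite (le_lt_trans (probability_le1 _ _)) ?ltry.
- by apply: bigcap_measurable => //; exists 0%N.
- move=> n m nm; apply/subsetPset => x /=; rewrite !in_itv/= !andbT.
  by apply: le_lt_trans; rewrite lerD2l lerN2 lef_pV2 ?posrE// ler_nat ltnS.
Qed.

End dcdf.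

Section revenue.
Context {R : realType}.
Implicit Types (A P : probability R R) (p : R).

Lemma nonneg_dist_integral_eq0 A (f : R -> \bar R) :
  nonneg_dist A -> (forall x, 0 <= f x) -> (forall x, (0 <= x)%R -> f x = 0) ->
  \int[A]_x f x = 0.
Proof.
move=> A0 f0 fp; apply/eqP; rewrite eq_le integral_ge0// andbT.
apply: (@le_trans _ _ (\int[A]_x (+oo * (\1_(`]-oo, 0[%classic) x)%:E))).
  apply: le_integral_pointwise => x _; have [x0|x0] := leP 0%R x.
    by rewrite fp// mule_ge0// lee_fin.
  by rewrite indicE mem_set/= ?in_itv//= mule1 leey.
rewrite ge0_integralZl//; last exact/measurable_EFinP/measurable_indic.
by rewrite integral_indic// setIT [X in _ * X](_ : _ = 0) ?mule0.
Qed.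

Lemma REV_le_mean P p : nonneg_dist P -> (0 <= p)%R -> REV p P <= \int[P]_x x%:E.
Proof.
move=> P0 p0.
have -> : \int[P]_x x%:E = \int[P]_x ((fun x => x%:E)^\+ x).
  rewrite [LHS]integralE (@nonneg_dist_integral_eq0 P (fun x => x%:E)^\-) ?sube0//.
  by move=> x x0; rewrite funenegE max_r// leeNl oppe0 lee_fin.
have -> : REV p P = \int[P]_x (p%:E * (\1_(`[p, +oo[%classic) x)%:E).
  rewrite ge0_integralZl_EFin//; last exact/measurable_EFinP/measurable_indic.
  by rewrite integral_indic// setIT.
apply: le_integral_pointwise => x _; rewrite funeposE indicE.
have [|] := boolP (x \in `[p, +oo[%classic); last by rewrite mule0 le_max lexx orbT.
by rewrite inE/= in_itv/= andbT mule1 le_max lee_fin => ->.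
Qed.

Lemma OPT_ge0 P : 0 <= OPT P.
Proof. by apply: ereal_sup_ubound; exists 0%R; rewrite /= ?lexx// /REV mul0e. Qed.

Lemma REV_le_OPT P p : REV p P <= OPT P.
Proof.
have [p0|p0] := leP 0%R p; first by apply: ereal_sup_ubound; exists p.
by apply: le_trans (OPT_ge0 P); rewrite /REV mule_le0_ge0// lee_fin ltW.
Qed.

Lemma REVA_le_OPT A P : REVA A P <= OPT P.
Proof.
apply: (@le_trans _ _ (\int[A]_p OPT P)).
  by apply: le_integral_pointwise => p _; exact: REV_le_OPT.
by rewrite integral_cst// [X in _ * X]probability_setT mule1.
Qed.

Lemma OPT_le_mean {mu sigma : R} {P} : Fclass mu sigma P -> OPT P <= mu%:E.
Proof.
case=> P0 [<- _]; apply: ge_ereal_sup => _ [p /= p0 <-].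
exact: REV_le_mean.
Qed.

(* On a distribution of nonnegative prices, REV may be replaced by its
   nonnegative part, which is the form Tonelli's theorem needs. *)
Lemma REVAE A P : nonneg_dist A ->
  REVA A P = \int[A]_p ((Num.max p 0%R)%:E * P `[p, +oo[%classic).
Proof.
move=> A0; rewrite /REVA integralE.
rewrite (@nonneg_dist_integral_eq0 A (fun p => REV p P)^\-) ?sube0//; last first.
  by move=> p p0; rewrite funenegE /REV max_r// leeNl oppe0 mule_ge0// lee_fin.
apply: eq_integral => p _; rewrite funeposE /REV.
have [p0|p0] := leP 0%R p; first by rewrite max_l// mule_ge0// lee_fin.
by rewrite mul0e max_r// mule_le0_ge0// lee_fin ltW.
Qed.

Lemma REVA_ge0 A P : nonneg_dist A -> 0 <= REVA A P.
Proof.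
move=> A0; rewrite REVAE// integral_ge0// => p _.
by rewrite mule_ge0// lee_fin le_max lexx orbT.
Qed.

End revenue.

Section mixture.
Context {R : realType} {d : measure_display} {T : measurableType d}.
Context {Th : probability T R} {Pth : T -> probability R R}.
Hypothesis Pth0 : forall th, nonneg_dist (Pth th).
Hypothesis mdcdf : measurable_fun [set xt : R * T | (0 <= xt.1)%R]
  (fun xt : R * T => fine (dcdf (Pth xt.2) xt.1)).

Lemma measurable_dcdf_mixture :
  measurable_fun setT (fun xt : R * T => fine (dcdf (Pth xt.2) xt.1)).
Proof.
have mge0 : measurable [set xt : R * T | (0 <= xt.1)%R].
  rewrite (_ : [set _ | _] = `[0%R, +oo[%classic `*` setT); first exact: measurableX.
  by apply/seteqP; split => -[x t] /=; rewrite in_itv/= andbT => //= -[].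
rewrite -(setUv [set xt : R * T | (0 <= xt.1)%R]).
apply/measurable_funU => //; first exact: measurableC.
split => //; refine (eq_measurable_fun (cst (0 : R)%R) _ (measurable_cst _)).
by move=> [x t]; rewrite inE /= => /negP; rewrite -ltNge => x0; rewrite dcdf_lt0.
Qed.

Lemma measurable_dcdf_section x : measurable_fun setT (fun th => dcdf (Pth th) x).
Proof.
have /measurable_EFinP := measurable_fun_pair2 x measurable_dcdf_mixture.
by apply: eq_measurable_fun => th _ /=; rewrite fineK// dcdf_fin_num.
Qed.

Lemma measurable_itvcy_mixture :
  measurable_fun setT (fun xt : R * T => Pth xt.2 `[xt.1, +oo[%classic).
Proof.
apply: (emeasurable_fun_cvg (fun n (xt : R * T) =>
  (1 - fine (dcdf (Pth xt.2) (xt.1 - n.+1%:R^-1)))%:E)%R).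
- move=> n; apply/measurable_EFinP/measurable_funB => //.
  have shift : measurable_fun setT (fun xt : R * T => ((xt.1 - n.+1%:R^-1)%R, xt.2)).
    by apply: measurable_fun_pair => //; exact: measurable_funB.
  exact: measurableT_comp measurable_dcdf_mixture shift.
- move=> [x t] _ /=; have := cvg_probability_itvoy (Pth t) x.
  apply: cvg_trans; apply: near_eq_cvg; near=> n.
  by rewrite -onemdcdf EFinB fineK ?dcdf_fin_num.
Unshelve. all: by end_near.
Qed.

Lemma measurable_revenue_mixture : measurable_fun setT
  (fun xt : R * T => (Num.max xt.1 0%R)%:E * Pth xt.2 `[xt.1, +oo[%classic).
Proof.
apply: emeasurable_funM; last exact: measurable_itvcy_mixture.
exact/measurable_EFinP/measurable_maxr.
Qed.

Context {Q : probability R R}.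
Hypothesis dcdfQ : forall x, dcdf Q x = \int[Th]_th dcdf (Pth th) x.

Lemma integral_mixture_itvoy x :
  \int[Th]_th Pth th `]x, +oo[%classic = Q `]x, +oo[%classic.
Proof.
under eq_integral do rewrite -onemdcdf.
have le1 th : 0 <= 1 - dcdf (Pth th) x by rewrite subre_ge0 ?dcdf_fin_num ?dcdf_le1.
have m1 : measurable_fun setT (fun th => 1 - dcdf (Pth th) x).
  exact/emeasurable_funB/measurable_dcdf_section.
have : \int[Th]_th (1 - dcdf (Pth th) x) + dcdf Q x = 1.
  rewrite dcdfQ -ge0_integralD//; last exact: measurable_dcdf_section.
  under eq_integral do rewrite subeK ?dcdf_fin_num//.
  by rewrite integral_cst// mul1e [LHS]probability_setT.
by move=> h; rewrite -onemdcdf -[in RHS]h addeK ?dcdf_fin_num.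
Qed.

(* The posterior is only known through its cdf, so Pr[X >= p] is reached as
   the limit of Pr[X > p - 1/(n+1)]. *)
Lemma integral_mixture_itvcy_le p :
  \int[Th]_th Pth th `[p, +oo[%classic <= Q `[p, +oo[%classic.
Proof.
have hQ := cvg_probability_itvoy Q p.
rewrite -(cvg_lim _ hQ)//; apply: lime_ge; first by apply/cvg_ex; eexists; exact: hQ.
apply: nearW => n; rewrite -integral_mixture_itvoy.
apply: le_integral_pointwise => th _; apply: le_measure; rewrite ?inE// => y /=.
by rewrite !in_itv/= !andbT; apply: lt_le_trans; rewrite ltrBlDr ltrDl.
Qed.

Section price_distribution.
Context {A : probability R R}.
Hypothesis A0 : nonneg_dist A.

Let revenue_ge0 (xt : R * T) :
  0 <= (Num.max xt.1 0%R)%:E * Pth xt.2 `[xt.1, +oo[%classic.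
Proof. by rewrite mule_ge0// lee_fin le_max lexx orbT. Qed.

Lemma measurable_REVA_mixture : measurable_fun setT (fun th => REVA A (Pth th)).
Proof.
have := measurable_fun_fubini_tonelli_G (m1 := A) _
  measurable_revenue_mixture revenue_ge0.
by apply: eq_measurable_fun => th _; rewrite /fubini_G REVAE.
Qed.

Lemma integral_REVA_mixture_le : \int[Th]_th REVA A (Pth th) <= REVA A Q.
Proof.
under eq_integral do rewrite REVAE//.
rewrite REVAE// -(fubini_tonelli _ measurable_revenue_mixture revenue_ge0) /=.
apply: le_integral_pointwise => p _.
rewrite ge0_integralZl_EFin ?le_max ?lexx ?orbT//; last first.
  exact: measurable_fun_pair2 p measurable_itvcy_mixture.
by apply: lee_wpmul2l; rewrite ?lee_fin ?le_max ?lexx ?orbT// integral_mixture_itvcy_le.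
Qed.

Lemma mixture_OPT_le (s : R) : (0 <= s)%R ->
  (forall th, OPT (Pth th) <= s%:E * REVA A (Pth th)) ->
  \int[Th]_th OPT (Pth th) <= s%:E * OPT Q.
Proof.
move=> s0 hs.
apply: (le_trans (le_integral_pointwise Th setT _ _ (fun th _ => hs th))).
rewrite ge0_integralZl_EFin//; last 2 first.
- by move=> th _; exact: REVA_ge0.
- exact: measurable_REVA_mixture.
apply: lee_wpmul2l; first by rewrite lee_fin.
exact: le_trans integral_REVA_mixture_le (REVA_le_OPT _ _).
Qed.

Lemma mixture_OPT_gt0 : (forall th, 0 < REVA A (Pth th)) -> 0 < OPT Q.
Proof.
move=> REVA_gt0; apply: lt_le_trans (REVA_le_OPT A Q).
apply: lt_le_trans integral_REVA_mixture_le.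
apply: integral_gt0 => //; last exact: measurable_REVA_mixture.
by rewrite [X in _ < X]probability_setT lte01.
Qed.

End price_distribution.
End mixture.

Section ratio_inf.
Context {R : realType}.
Implicit Types (a b : \bar R) (s : R).

Lemma ratio_inf_ge0 a b : 0 <= a -> 0 <= b -> 0 <= ratio_inf a b.
Proof.
by move=> a0 b0; rewrite /ratio_inf; case: ifP => // _; rewrite mule_ge0// inve_ge0.
Qed.

Lemma ratio_inf_fin_le a b s : 0 < b -> b \is a fin_num ->
  (ratio_inf a b <= s%:E) = (a <= s%:E * b).
Proof.
case: b => [r|//|//] + _; rewrite lte_fin => r0.
by rewrite /ratio_inf eqe gt_eqF// inver gt_eqF// lee_pdivrMr.
Qed.

Lemma le_ratio_inf a b s : (0 <= s)%R -> 0 < b -> a <= s%:E * b ->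
  ratio_inf a b <= s%:E.
Proof.
move=> s0; case: b => [r||//] b0 le_ab; last by rewrite /ratio_inf invey mule0 lee_fin.
by rewrite ratio_inf_fin_le.
Qed.

End ratio_inf.

Theorem lemma4 (R : realType) (mu sigma : R) :
  (0 < mu)%R -> (0 <= sigma)%R ->
  forall (d : measure_display) (T : measurableType d) (Th : probability T R)
         (Pth : T -> probability R R),
    (forall th, Fclass mu sigma (Pth th)) ->
    measurable_fun [set xt : R * T | (0 <= fst xt)%R]
      (fun xt : R * T => fine (dcdf (Pth (snd xt)) (fst xt))) ->
    forall Q : probability R R,
      (forall z : R, dcdf Q z = (\int[Th]_th dcdf (Pth th) z)) ->
      ratio_inf (\int[Th]_th OPT (Pth th)) (OPT Q) <= APX mu sigma.
Proof.
move=> _ _ d T Th Pth Pth_F mdcdf Q dcdfQ.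
have Pth0 th : nonneg_dist (Pth th) by case: (Pth_F th).
apply/ereal_infP => _ [A /= A0 <-].
set S := ereal_sup _.
have ratio_le_S th : ratio_inf (OPT (Pth th)) (REVA A (Pth th)) <= S.
  by apply: ereal_sup_ubound; exists (Pth th).
have [->|S_lty] := eqVneq S +oo; first exact: leey.
have [th0] := probability_inhabited Th.
have S0 : 0 <= S.
  apply: le_trans (ratio_le_S th0).
  exact: ratio_inf_ge0 (OPT_ge0 _) (REVA_ge0 _ _ A0).
have [s Ss] : exists s, S = s%:E.
  by exists (fine S); rewrite fineK// ge0_fin_numE// ltey.
rewrite Ss in ratio_le_S S0 *; rewrite lee_fin in S0.
have REVA_fin th : REVA A (Pth th) \is a fin_num.
  rewrite ge0_fin_numE ?REVA_ge0//.
  apply: (@le_lt_trans _ _ mu%:E); last exact: ltry.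
  exact: le_trans (REVA_le_OPT _ _) (OPT_le_mean (Pth_F th)).
have REVA_gt0 th : 0 < REVA A (Pth th).
  rewrite lt0e REVA_ge0// andbT.
  by apply: contraTneq (ratio_le_S th) => ->; rewrite /ratio_inf eqxx leye_eq.
apply: le_ratio_inf => //.
- exact: (mixture_OPT_gt0 Pth0 mdcdf dcdfQ A0 REVA_gt0).
- apply: (mixture_OPT_le Pth0 mdcdf dcdfQ A0 _ S0) => th.
  by rewrite -ratio_inf_fin_le.
Qed.
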